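(* Let $t\ge 1$ and let $\kappa_1,\ldots,\kappa_t$ be integers with $\kappa_i\ge 2$ and $\kappa_1\kappa_2\cdots\kappa_t=n$. Let $\ell_{i,j}$ be integers with $0\le \ell_{i,j}\le \kappa_j-1$ for $i=2,\ldots,t$ and $j=1,\ldots,i-1$. Then, with $K=(\kappa_i)$ and $L=(\ell_{i,j})$, the set $\Gamma(K,L)$ is an Abelian group (under the multiplication of the quotient ring) of order $|\Gamma(K,L)|=n$.
   Context: Let $I$ be the ideal of the polynomial ring $\mathbb{R}[x_1,\ldots,x_t]$ generated by $x_1^{\kappa_1}-1$ and by $x_i^{\kappa_i}-x_1^{\ell_{i,1}}\cdots x_{i-1}^{\ell_{i,i-1}}$ for $i=2,\ldots,t$. The monomial group $\Gamma(K,L)$ is the set of residue classes in $\mathbb{R}[x_1,\ldots,x_t]/I$ of the monomials $x_1^{j_1}x_2^{j_2}\cdots x_t^{j_t}$ with $0\le j_i\le \kappa_i-1$ for all $i$; a product of two such monomials is reduced back to this form using the relations $x_1^{\kappa_1}=1$ and $x_i^{\kappa_i}=x_1^{\ell_{i,1}}\cdots x_{i-1}^{\ell_{i,i-1}}$ ($i\ge 2$). *)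

From HB Require Import structures.
From mathcomp Require Import all_boot all_order all_algebra.
From mathcomp Require Import mpoly.
From Stdlib Require Rdefinitions.
From mathcomp Require Import Rstruct.
Set Implicit Arguments. Unset Strict Implicit. Unset Printing Implicit Defensive.
Import GRing.Theory.
Local Open Scope ring_scope.

(* Polynomial ring R[x_1..x_t]; variable x_{i+1} is 'X_i, i : 'I_t. *)
Notation Rpoly t := {mpoly Rdefinitions.R[t]}.

Definition gen (t : nat) (kappa : 'I_t -> nat) (ell : 'I_t -> 'I_t -> nat)
  (i : 'I_t) : Rpoly t :=
  'X_i ^+ kappa i - \prod_(j < t | (nat_of_ord j < nat_of_ord i)%N) 'X_j ^+ ell i j.

Definition in_ideal (t : nat) (kappa : 'I_t -> nat) (ell : 'I_t -> 'I_t -> nat)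
  (p : Rpoly t) : Prop :=
  exists c : 'I_t -> Rpoly t, p = \sum_(i < t) c i * gen kappa ell i.

Definition congr_I (t : nat) (kappa : 'I_t -> nat) (ell : 'I_t -> 'I_t -> nat)
  (p q : Rpoly t) : Prop := in_ideal kappa ell (p - q).

Definition box (t : nat) (kappa : 'I_t -> nat) : finType :=
  {dffun forall i : 'I_t, 'I_(kappa i)}.

Definition mono (t : nat) (kappa : 'I_t -> nat) (e : box kappa) : Rpoly t :=
  \prod_(i < t) 'X_i ^+ (e i : nat).

(* Let Λ ⊂ ℤ^t be the lattice spanned by the relation vectors
   v_i = κ_i e_i - Σ_{j<i} ℓ_{i,j} e_j, so that x^a ≡ x^b whenever a - b ∈ Λ.
   Applying x_i^{κ_i} ≡ x_1^{ℓ_{i,1}} ⋯ x_{i-1}^{ℓ_{i,i-1}} from the last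
   variable down brings every monomial into the box, and the same relation
   makes x_i invertible modulo I once x_1, …, x_{i-1} are.  Conversely, the
   sum of the coefficients of a polynomial over one coset of Λ is a linear
   form vanishing on I; as the matrix of the v_i is triangular with diagonal
   κ, two box exponents in the same coset coincide, so the n box monomials
   have pairwise distinct classes. *)

From HB Require Import structures.
From mathcomp Require Import all_boot all_order all_algebra.
From mathcomp Require Import mpoly.
From Stdlib Require Rdefinitions.
From mathcomp Require Import Rstruct.
From mathcomp Require Import zify ring.
From Stdlib Require Import ClassicalEpsilon.
Set Implicit Arguments. Unset Strict Implicit. Unset Printing Implicit Defensive.
Import GRing.Theory.
Local Open Scope ring_scope.

Lemma ord_down_ind n (P : 'I_n -> Prop) :
  (forall i : 'I_n, (forall j : 'I_n, (i < j)%N -> P j) -> P i) -> forall i, P i.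
Proof.
move=> IH i; have [k] := ubnP (n - i); elim: k i => // k IHk i lt_ni.
apply: IH => j lt_ij; apply: IHk; have := ltn_ord j; lia.
Qed.

Lemma ord_up_ind n (P : 'I_n -> Prop) :
  (forall i : 'I_n, (forall j : 'I_n, (j < i)%N -> P j) -> P i) -> forall i, P i.
Proof.
move=> IH i; have [k] := ubnP i; elim: k i => // k IHk i lt_ik.
by apply: IH => j lt_ji; apply: IHk; apply: leq_trans lt_ji _.
Qed.

Lemma int_multiple_lt_eq0 (x y k : nat) (w : int) :
  (x < k)%N -> (y < k)%N -> x%:Z - y%:Z = w * k%:Z -> w = 0.
Proof. move=> lt_xk lt_yk; nia. Qed.

Section MonomialWeight.
Context (R : nzRingType) (t : nat).
Implicit Types (g : 'X_{1..t} -> R) (p : {mpoly R[t]}).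

Definition mweight g p : R := \sum_(m <- msupp p) p@_m * g m.

Lemma mweightE g p s : uniq s -> {subset msupp p <= s} ->
  mweight g p = \sum_(m <- s) p@_m * g m.
Proof.
move=> uniq_s supp_s; rewrite (bigID (mem (msupp p))) /=.
rewrite [X in _ + X]big1 ?addr0 => [|m /memN_msupp_eq0 ->]; last by rewrite mul0r.
rewrite -big_filter; apply/perm_big/uniq_perm; rewrite ?filter_uniq //.
by move=> m; rewrite mem_filter andb_idr //; apply: supp_s.
Qed.

Lemma mweight_is_zmod_morphism g : zmod_morphism (mweight g).
Proof.
move=> p q; pose s := undup (msupp p ++ msupp q).
have in_s m : (m \in s) = (m \in msupp p) || (m \in msupp q).
  by rewrite mem_undup mem_cat.
rewrite !(@mweightE g _ s (undup_uniq _)) -?sumrB.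
- by apply: eq_bigr => m _; rewrite mcoeffB mulrBl.
all: move=> m; rewrite in_s; try by move=> ->; rewrite ?orbT.
by move/msuppB_le; rewrite mem_cat.
Qed.

HB.instance Definition _ g := GRing.isZmodMorphism.Build {mpoly R[t]} R
  (mweight g) (mweight_is_zmod_morphism g).

Lemma mweightX g u : mweight g 'X_[u] = g u.
Proof. by rewrite /mweight msuppX big_seq1 mcoeffX eqxx mul1r. Qed.

Lemma mweightMX g p u :
  mweight g (p * 'X_[u]) = \sum_(m <- msupp p) p@_m * g (u + m)%MM.
Proof.
rewrite /mweight (perm_big _ (msuppMX p u)) big_map.
by apply: eq_bigr => m _; rewrite mcoeffMX.
Qed.

Lemma mweightMXB g p a b : (forall m, g (a + m)%MM = g (b + m)%MM) ->
  mweight g (p * ('X_[a] - 'X_[b])) = 0.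
Proof.
move=> gab; rewrite mulrBr raddfB /= !mweightMX.
by apply/eqP; rewrite subr_eq0; apply/eqP/eq_bigr => m _; rewrite gab.
Qed.

End MonomialWeight.

Section MonomialGroup.
Variables (t : nat) (kappa : 'I_t -> nat) (ell : 'I_t -> 'I_t -> nat).
Local Notation inI := (in_ideal kappa ell).
Local Notation equivI := (congr_I kappa ell).
Implicit Types (i j : 'I_t) (p q r : Rpoly t) (a b m : 'X_{1..t}).

Lemma in_ideal0 : inI 0.
Proof. by exists (fun=> 0); rewrite big1 // => i _; rewrite mul0r. Qed.

Lemma in_idealD p q : inI p -> inI q -> inI (p + q).
Proof.
move=> [c ->] [d ->]; exists (fun i => c i + d i).
by rewrite -big_split; apply: eq_bigr => i _; rewrite mulrDl.
Qed.

Lemma in_idealMl r p : inI p -> inI (r * p).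
Proof.
move=> [c ->]; exists (fun i => r * c i).
by rewrite mulr_sumr; apply: eq_bigr => i _; rewrite mulrA.
Qed.

Lemma in_idealN p : inI p -> inI (- p).
Proof. by rewrite -mulN1r; apply: in_idealMl. Qed.

Lemma in_ideal_genMl r i : inI (r * gen kappa ell i).
Proof.
exists (fun j => if j == i then r else 0).
by rewrite (bigD1 i) //= eqxx big1 ?addr0 // => j /negbTE ->; rewrite mul0r.
Qed.

Lemma congrI_refl p : equivI p p.
Proof. by rewrite /congr_I subrr; apply: in_ideal0. Qed.

Lemma congrI_sym p q : equivI p q -> equivI q p.
Proof. by rewrite /congr_I => /in_idealN; rewrite opprB. Qed.

Lemma congrI_trans p q r : equivI p q -> equivI q r -> equivI p r.
Proof.
rewrite /congr_I => pq qr; have -> : p - r = (p - q) + (q - r) by rewrite addrA subrK.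
exact: in_idealD.
Qed.

Lemma congrIMl r p q : equivI p q -> equivI (r * p) (r * q).
Proof. by rewrite /congr_I -mulrBr; apply: in_idealMl. Qed.

Lemma congrIM1 p q : equivI p 1 -> equivI q 1 -> equivI (p * q) 1.
Proof.
rewrite /congr_I => p1 q1; have -> : p * q - 1 = p * (q - 1) + (p - 1) by ring.
by apply: in_idealD => //; apply: in_idealMl.
Qed.

Definition ell_mnm i : 'X_{1..t} := (\sum_(j < t | (j < i)%N) U_(j) *+ ell i j)%MM.

Lemma ell_mnmE i j : ell_mnm i j = if (j < i)%N then ell i j else 0%N.
Proof.
rewrite mnm_sumE; under eq_bigr do rewrite mulmnE mnm1E.
case: ifP => lt_ji.
  rewrite (bigD1 j) //= eqxx mul1n big1 ?addn0 // => k /andP[_ /negbTE ->].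
  by rewrite mul0n.
rewrite big1 // => k lt_ki; case: eqP lt_ki => [->|_ _]; last by rewrite mul0n.
by rewrite lt_ji.
Qed.

Lemma genE i : gen kappa ell i = 'X_[U_(i) *+ kappa i] - 'X_[ell_mnm i].
Proof. by rewrite /gen mpolyXn mprodXnE. Qed.

Definition box_mnm (e : box kappa) : 'X_{1..t} := [multinom (e i : nat) | i < t].

Lemma monoE e : mono e = 'X_[box_mnm e].
Proof. by rewrite /mono mpolyXE_id; apply: eq_bigr => i _; rewrite mnmE. Qed.

Lemma congrI_relXn w i k :
  equivI 'X_[w + (U_(i) *+ kappa i) *+ k] 'X_[w + ell_mnm i *+ k].
Proof.
rewrite /congr_I !mpolyXD -mulrBr -!(mpolyXn _ _ k) subrXX -genE.
by rewrite mulrCA mulrC; apply: in_ideal_genMl.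
Qed.

Definition rel_vec i j : int := ((U_(i) *+ kappa i)%MM j)%:Z - (ell_mnm i j)%:Z.

Lemma rel_vecE i j :
  rel_vec i j = if i == j then (kappa i)%:Z else if (j < i)%N then - (ell i j)%:Z else 0.
Proof.
rewrite /rel_vec mulmnE mnm1E ell_mnmE; case: eqP => [->|_].
  by rewrite ltnn subr0 mul1n.
by rewrite mul0n sub0r; case: ifP.
Qed.

Definition lattice_eq a b : Prop :=
  exists c : 'I_t -> int, forall j, (a j)%:Z - (b j)%:Z = \sum_i c i * rel_vec i j.

Lemma lattice_eq_refl a : lattice_eq a a.
Proof. by exists (fun=> 0) => j; rewrite subrr big1 // => i _; rewrite mul0r. Qed.

Lemma lattice_eq_shift a a' b i (d : int) :
  (forall j, (a' j)%:Z - (a j)%:Z = d * rel_vec i j) ->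
  lattice_eq a b -> lattice_eq a' b.
Proof.
move=> a'a [c ab]; exists (fun k => c k + (k == i)%:R * d) => j.
rewrite -[_ - _](subrKA (a j)%:Z) addrC ab a'a.
under [RHS]eq_bigr do rewrite mulrDl.
rewrite big_split /=; congr (_ + _).
rewrite (bigD1 i) //= eqxx mul1r big1 ?addr0 // => k /negbTE ->.
by rewrite !mul0r.
Qed.

Lemma lattice_eq_relD i m b :
  lattice_eq (U_(i) *+ kappa i + m)%MM b <-> lattice_eq (ell_mnm i + m)%MM b.
Proof.
by split; [apply: (@lattice_eq_shift _ _ b i (-1)) | apply: (@lattice_eq_shift _ _ b i 1)]
  => j; rewrite !mnmDE /rel_vec !PoszD; ring.
Qed.

Lemma lattice_eq_box (e e' : box kappa) :
  lattice_eq (box_mnm e') (box_mnm e) -> e' = e.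
Proof.
move=> [c ee'].
have c0 : forall j, c j = 0.
  elim/ord_down_ind => j c0_above; move: (ee' j).
  rewrite (bigD1 j) //= big1 ?addr0 => [|i ne_ij]; last first.
    rewrite rel_vecE (negbTE ne_ij); case: ltnP => [/c0_above ->|_].
      by rewrite mul0r.
    by rewrite mulr0.
  by rewrite rel_vecE eqxx !mnmE; apply: int_multiple_lt_eq0.
apply/ffunP => j; apply/val_inj/eqP; rewrite -eqz_nat -subr_eq0.
have := ee' j; rewrite !mnmE => ->.
by rewrite big1 // => i _; rewrite c0 mul0r.
Qed.

Definition coset_indicator b m : Rdefinitions.R :=
  if excluded_middle_informative (lattice_eq m b) then 1 else 0.

Lemma coset_indicator_eq1 b m : lattice_eq m b -> coset_indicator b m = 1.
Proof. by rewrite /coset_indicator; case: excluded_middle_informative. Qed.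

Lemma coset_indicator_eq0 b m : ~ lattice_eq m b -> coset_indicator b m = 0.
Proof. by rewrite /coset_indicator; case: excluded_middle_informative. Qed.

Lemma mweight_coset_ideal b p : inI p -> mweight (coset_indicator b) p = 0.
Proof.
move=> [c ->]; rewrite raddf_sum big1 // => i _.
rewrite genE; apply: mweightMXB => m.
have [relU|relU] := classic (lattice_eq (U_(i) *+ kappa i + m)%MM b).
- by rewrite !coset_indicator_eq1 //; apply/lattice_eq_relD.
- by rewrite !coset_indicator_eq0 // => /lattice_eq_relD.
Qed.

Lemma congrI_mono_inj (e e' : box kappa) : equivI (mono e) (mono e') -> e = e'.
Proof.
move=> /(mweight_coset_ideal (box_mnm e)); rewrite !monoE raddfB /= !mweightX.
rewrite coset_indicator_eq1; last exact: lattice_eq_refl.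
have [/lattice_eq_box -> _ //|not_rel] := classic (lattice_eq (box_mnm e') (box_mnm e)).
by rewrite coset_indicator_eq0 // subr0 => /eqP; rewrite oner_eq0.
Qed.

Lemma card_box : #|box kappa| = (\prod_(i < t) kappa i)%N.
Proof.
by rewrite card_dep_ffun foldrE big_image /=; apply: eq_bigr => i _; rewrite card_ord.
Qed.

Hypothesis kappa_gt0 : forall i, (0 < kappa i)%N.

Lemma congrIX_mono_above k m : (forall j : 'I_t, (k <= j)%N -> (m j < kappa j)%N) ->
  exists e : box kappa, equivI 'X_[m] (mono e).
Proof.
elim: k m => [|k IHk] m m_small.
  exists [ffun j => Ordinal (m_small j isT)]; rewrite monoE (_ : box_mnm _ = m).
    exact: congrI_refl.
  by apply/mnmP => j; rewrite mnmE ffunE.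
have [lt_kt|le_tk] := ltnP k t; last by apply: IHk => j le_kj; have := ltn_ord j; lia.
pose i := Ordinal lt_kt; pose w := [multinom if j == i then m i %% kappa i else m j | j < t].
have -> : m = (w + (U_(i) *+ kappa i) *+ (m i %/ kappa i))%MM.
  apply/mnmP => j; rewrite mnmDE !mulmnE mnm1E mnmE.
  by case: eqVneq => [->|_]; rewrite ?mul1n ?mul0n ?addn0 // mulnC addnC -divn_eq.
have [|e] := IHk (w + ell_mnm i *+ (m i %/ kappa i))%MM.
  move=> j le_kj; rewrite mnmDE mulmnE ell_mnmE mnmE.
  case: eqVneq => [->|ne_ji]; first by rewrite ltnn mul0n addn0 ltn_pmod.
  have /negbTE -> : ~~ (j < i)%N by rewrite -leqNgt.
  rewrite mul0n addn0; apply: m_small.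
  by move: le_kj ne_ji; rewrite -val_eqE /=; lia.
by exists e; apply: congrI_trans (congrI_relXn _ _ _) _.
Qed.

Lemma congrIX_mono m : exists e : box kappa, equivI 'X_[m] (mono e).
Proof. by apply: (@congrIX_mono_above t) => j; rewrite leqNgt ltn_ord. Qed.

Definition unitX m : Prop := exists m', equivI ('X_[m] * 'X_[m']) 1.

Lemma unitX0 : unitX 0.
Proof. by exists 0%MM; rewrite mpolyX0 mulr1; apply: congrI_refl. Qed.

Lemma unitXD a b : unitX a -> unitX b -> unitX (a + b).
Proof.
move=> [a' aa'] [b' bb']; exists (a' + b')%MM.
rewrite !mpolyXD mulrACA; exact: congrIM1.
Qed.

Lemma unitX_sum (I : Type) (r : seq I) (P : pred I) (F : I -> 'X_{1..t}) :
  (forall x, P x -> unitX (F x)) -> unitX (\sum_(x <- r | P x) F x)%MM.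
Proof.
move=> unitF; elim/big_rec: _ => [|x s Px]; first exact: unitX0.
by apply: unitXD; apply: unitF.
Qed.

Lemma unitXMn a k : unitX a -> unitX (a *+ k)%MM.
Proof.
move=> unit_a; elim: k => [|k IHk]; first by rewrite mulm0n; apply: unitX0.
by rewrite mulmS; apply: unitXD.
Qed.

Lemma unitXU i : unitX U_(i).
Proof.
elim/ord_up_ind: i => i unit_below.
have [b unit_b] : unitX (ell_mnm i).
  by apply: unitX_sum => j lt_ji; apply/unitXMn/unit_below.
exists (U_(i) *+ (kappa i).-1 + b)%MM.
rewrite -mpolyXD addmA -mulmS prednK // mpolyXD.
apply: congrI_trans unit_b; rewrite /congr_I -mulrBl -genE mulrC.
exact: in_ideal_genMl.
Qed.

Lemma unitX_all m : unitX m.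
Proof. by rewrite [m]multinomUE_id; apply: unitX_sum => i _; apply/unitXMn/unitXU. Qed.

Lemma mono_inv (e : box kappa) : exists e' : box kappa, equivI (mono e * mono e') 1.
Proof.
have [m' unit_e] := unitX_all (box_mnm e); have [e' m'e'] := congrIX_mono m'.
exists e'; apply: congrI_trans unit_e; rewrite monoE.
by apply/congrIMl/congrI_sym.
Qed.

End MonomialGroup.

Theorem mainTheorem2 (t n : nat) (kappa : 'I_t -> nat)
  (ell : 'I_t -> 'I_t -> nat) :
  (1 <= t)%N ->
  (forall i, 2 <= kappa i)%N ->
  (\prod_(i < t) kappa i)%N = n ->
  (forall i j : 'I_t, (nat_of_ord j < nat_of_ord i)%N -> (ell i j <= (kappa j).-1)%N) ->
  [/\ (* |Gamma(K,L)| = n: the n box monomials have pairwise distinct classes *)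
      (#|box kappa| = n /\
       forall e e' : box kappa,
         congr_I kappa ell (mono e) (mono e') -> e = e'),
      (* identity: the class of 1 lies in Gamma *)
      (exists e : box kappa, congr_I kappa ell (mono e) 1),
      (* closure under the multiplication of the quotient ring *)
      (forall e1 e2 : box kappa, exists e3 : box kappa,
         congr_I kappa ell (mono e1 * mono e2) (mono e3)),
      (* inverses *)
      (forall e : box kappa, exists e' : box kappa,
         congr_I kappa ell (mono e * mono e') 1)
    & (* commutativity *)
      (forall e1 e2 : box kappa,
         congr_I kappa ell (mono e1 * mono e2) (mono e2 * mono e1))].
Proof.
move=> _ kappa_ge2 <- _.
have kappa_gt0 i : (0 < kappa i)%N by apply: leq_trans (kappa_ge2 i).
split.
- by split; [apply: card_box | apply: congrI_mono_inj].
- have [e one_e] := congrIX_mono ell kappa_gt0 0.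
  by exists e; apply: congrI_sym; rewrite -mpolyX0.
- by move=> e1 e2; rewrite !monoE -mpolyXD; apply: congrIX_mono.
- exact: mono_inv.
- by move=> e1 e2; rewrite mulrC; apply: congrI_refl.
Qed.
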